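(* Assume the common support, overlap and unconfoundedness assumptions. Then for all $x\in\mathcal X$, $\theta_{\mathrm{AR}}(x)=r(x,p_0)\,\Gamma_{\mathrm{AR}}(x,p)$, where $p=p_0$ under Design 1 and $p=0$ under Design 2.
   Context: Population variables: $Y^*\in\{0,1\}$ (outcome), $T^*\in\{0,1\}$ (treatment), $X^*$ (covariate vector). Potential outcomes $Y^*(1),Y^*(0)\in\{0,1\}$ satisfy $Y^*=T^*Y^*(1)+(1-T^* )Y^*(0)$. Let $p_0:=\Pr(Y^*=1)$. The observed vector $(Y,T,X)$ arises from Bernoulli sampling: $Y\in\{0,1\}$ is drawn with known probability $h_0:=\Pr(Y=1)\in(0,1)$, and given $Y=y$, $(T,X)$ is drawn from a distribution $\mathcal P_y$. Densities (or mass functions) are denoted by $f$. Design 1 (case-control): for all $t\in\{0,1\}$, $x\in\mathcal X$, $y\in\{0,1\}$, $f_{X|Y}(x\mid y)=f_{X^*|Y^*}(x\mid y)$ and $\Pr(T=t\mid X=x,Y=y)=\Pr(T^*=t\mid X^*=x,Y^*=y)$. Design 2 (case-population): for all $t,x$, $f_{X|Y}(x\mid 0)=f_{X^*}(x)$, $\Pr(T=t\mid X=x,Y=0)=\Pr(T^*=t\mid X^*=x)$, $f_{X|Y}(x\mid 1)=f_{X^*|Y^*}(x\mid 1)$, $\Pr(T=t\mid X=x,Y=1)=\Pr(T^*=t\mid X^*=x,Y^*=1)$. Common support assumption: the support of $X^*$ and that of $X$ given $Y=y$ for $y=0,1$ coincide; call it $\mathcal X$. Let $\Pi(t\mid y,x):=\Pr(T=t\mid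 Y=y,X=x)$, assumed nonzero for all $t,y$. For $p\in[0,1]$, under Design 1, $r(x,p):=\frac{p(1-h_0)\Pr(Y=1\mid X=x)}{p(1-h_0)\Pr(Y=1\mid X=x)+h_0(1-p)\Pr(Y=0\mid X=x)}$, and under Design 2, $r(x,p):=\frac{p(1-h_0)}{h_0}\frac{\Pr(Y=1\mid X=x)}{\Pr(Y=0\mid X=x)}$. Define $\Gamma_{\mathrm{AR}}(x,p):=\frac{\Pi(1\mid 1,x)}{\Pi(1\mid 0,x)+r(x,p)\{\Pi(1\mid 1,x)-\Pi(1\mid 0,x)\}}-\frac{\Pi(0\mid 1,x)}{\Pi(0\mid 0,x)+r(x,p)\{\Pi(0\mid 1,x)-\Pi(0\mid 0,x)\}}$. Causal attributable risk: $\theta_{\mathrm{AR}}(x):=\Pr\{Y^*(1)=1\mid X^*=x\}-\Pr\{Y^*(0)=1\mid X^*=x\}$. Overlap: for all $(t,x)\in\{0,1\}\times\mathcal X$, $0<\Pr\{Y^*(t)=1\mid X^*=x\}<1$ and $0<\Pr(T^*=1\mid X^*=x)<1$. Unconfoundedness: for all $t,x$, $\Pr\{Y^*(t)=1\mid T^*=1,X^*=x\}=\Pr\{Y^*(t)=1\mid T^*=0,X^*=x\}$. *)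

From HB Require Import structures.
From mathcomp Require Import all_boot all_order all_algebra.
From mathcomp Require Import all_classical all_reals all_analysis.
Set Implicit Arguments. Unset Strict Implicit. Unset Printing Implicit Defensive.
Import Order.TTheory GRing.Theory Num.Theory.
Local Open Scope ring_scope.

(* Covariate space: a measurable space T with a reference measure mu
   (counting measure for mass functions, Lebesgue measure for densities, ...).

   POPULATION: the law of (X_star, T_star, Y_star(1), Y_star(0)) is given by
     - a density f of X_star w.r.t. mu, and
     - the conditional pmf q x t a b = Pr(T_star = t, Y_star(1) = a, Y_star(0) = b | X_star = x). *)

Definition Ystar (t a b : bool) : bool := if t then a else b.

Section Population.
Variables (R : realType) (d : measure_display) (T : measurableType d).
Variable mu : {measure set T -> \bar R}.
Variable f : T -> R.
Variable q : T -> bool -> bool -> bool -> R.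

Definition pop_pr (P : bool -> bool -> bool -> bool) (x : T) : R :=
  \sum_(t : bool) \sum_(a : bool) \sum_(b : bool) (if P t a b then q x t a b else 0).

Definition prY_X (y : bool) (x : T) : R := pop_pr (fun t a b => Ystar t a b == y) x.
Definition prT_X (s : bool) (x : T) : R := pop_pr (fun t _ _ => t == s) x.
Definition prYpot_X (s : bool) (x : T) : R := pop_pr (fun _ a b => if s then a else b) x.
Definition prYpot_TX (s u : bool) (x : T) : R :=
  pop_pr (fun t a b => (t == u) && (if s then a else b)) x / prT_X u x.
Definition prT_XY (s y : bool) (x : T) : R :=
  pop_pr (fun t a b => (t == s) && (Ystar t a b == y)) x / prY_X y x.

Definition p0 : R := fine (\int[mu]_x (f x * prY_X true x)%:E)%E.
Definition prY (y : bool) : R := if y then p0 else 1 - p0.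
Definition fX_Y (y : bool) (x : T) : R := f x * prY_X y x / prY y.

Definition theta_AR (x : T) : R := prYpot_X true x - prYpot_X false x.

Definition pop_model : Prop :=
  measurable_fun setT f /\ (forall x, 0 <= f x) /\
  (\int[mu]_x (f x)%:E = 1)%E /\
  (forall t a b, measurable_fun setT (fun x => q x t a b)) /\
  (forall x t a b, 0 <= q x t a b) /\
  (forall x, \sum_(t : bool) \sum_(a : bool) \sum_(b : bool) q x t a b = 1).

Definition supp : set T := [set x | 0 < f x].

Definition overlap : Prop :=
  forall x, supp x ->
    (forall s, 0 < prYpot_X s x < 1) /\ 0 < prT_X true x < 1.

Definition unconfounded : Prop :=
  forall x, supp x -> forall s, prYpot_TX s true x = prYpot_TX s false x.

End Population.

(* OBSERVED data (Y, T, X): Y ~ Bernoulli(h0); given Y = y, X has density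
   fo y (w.r.t. mu) and Pr(T = t | Y = y, X = x) = Pi t y x. *)
Section Observed.
Variables (R : realType) (T : Type).
Variables (h0 : R) (fo : bool -> T -> R) (Pi : bool -> bool -> T -> R).

(* Pr(Y = y | X = x), by Bayes' rule *)
Definition obs_prY_X (y : bool) (x : T) : R :=
  (if y then h0 else 1 - h0) * fo y x / (h0 * fo true x + (1 - h0) * fo false x).

Inductive design := Design1 | Design2.

Definition r_fun (D : design) (x : T) (p : R) : R :=
  match D with
  | Design1 => p * (1 - h0) * obs_prY_X true x /
               (p * (1 - h0) * obs_prY_X true x + h0 * (1 - p) * obs_prY_X false x)
  | Design2 => p * (1 - h0) / h0 * (obs_prY_X true x / obs_prY_X false x)
  end.

Definition Gamma_AR (D : design) (x : T) (p : R) : R :=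
  Pi true true x / (Pi true false x + r_fun D x p * (Pi true true x - Pi true false x))
  - Pi false true x / (Pi false false x + r_fun D x p * (Pi false true x - Pi false false x)).

End Observed.

Definition design_holds (R : realType) (d : measure_display) (T : measurableType d)
  (mu : {measure set T -> \bar R}) (f : T -> R) (q : T -> bool -> bool -> bool -> R)
  (D : design) (fo : bool -> T -> R) (Pi : bool -> bool -> T -> R) : Prop :=
  match D with
  | Design1 => forall x, supp f x -> forall t y,
       fo y x = fX_Y mu f q y x /\ Pi t y x = prT_XY q t y x
  | Design2 => forall x, supp f x -> forall t,
       [/\ fo false x = f x, Pi t false x = prT_X q t x,
           fo true x = fX_Y mu f q true x & Pi t true x = prT_XY q t true x]
  end.

Definition common_support (R : realType) (T : Type) (f : T -> R) (fo : bool -> T -> R) : Prop :=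
  forall x y, 0 < f x <-> 0 < fo y x.

(* Unconfoundedness makes the law of Y*(s) given X* = x equal to its law given
   (T* = s, X* = x), which by consistency is the law of Y* given (T* = s, X* = x);
   hence theta_AR(x) = Pr(T*=1, Y*=1 | x) / Pr(T*=1 | x) - Pr(T*=0, Y*=1 | x) / Pr(T*=0 | x).
   In both designs Bayes' rule turns r(x, p0) into Pr(Y* = 1 | X* = x).  The
   denominators of Gamma_AR are Pr(T* = t | X* = x): in Design 1 by total
   probability over Y*, in Design 2 because r(x, 0) = 0 and the controls are
   sampled from the population.  Multiplying Gamma_AR by r then turns
   Pr(T* = t | Y* = 1, x) into the joint Pr(T* = t, Y* = 1 | x). *)

From HB Require Import structures.
From mathcomp Require Import all_boot all_order all_algebra.
From mathcomp Require Import all_classical all_reals all_analysis.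
From mathcomp Require Import ring.
Import Order.TTheory GRing.Theory Num.Theory.
Set Implicit Arguments.
Unset Strict Implicit.
Unset Printing Implicit Defensive.
Local Open Scope ring_scope.

Section ConditionalLaw.
Variables (R : realType) (d : measure_display) (T : measurableType d).
Variables (q : T -> bool -> bool -> bool -> R) (x : T).
Hypothesis q_sum1 : \sum_(t : bool) \sum_(a : bool) \sum_(b : bool) q x t a b = 1.

Lemma eq_pop_pr (P P' : bool -> bool -> bool -> bool) :
  (forall t a b, P t a b = P' t a b) -> pop_pr q P x = pop_pr q P' x.
Proof.
move=> eqP; rewrite /pop_pr; apply: eq_bigr => t _; apply: eq_bigr => a _.
by apply: eq_bigr => b _; rewrite eqP.
Qed.

Lemma pop_pr_split (P Q : bool -> bool -> bool -> bool) :
  pop_pr q P x = pop_pr q (fun t a b => P t a b && Q t a b) x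
               + pop_pr q (fun t a b => P t a b && ~~ Q t a b) x.
Proof.
rewrite /pop_pr -big_split; apply: eq_bigr => t _; rewrite -big_split.
apply: eq_bigr => a _; rewrite -big_split; apply: eq_bigr => b _.
by case: (P t a b) (Q t a b) => [] [] /=; rewrite ?addr0 ?add0r.
Qed.

Lemma pop_pr_predT : pop_pr q (fun _ _ _ => true) x = 1.
Proof. exact: q_sum1. Qed.

Lemma pop_pr_compl (P : bool -> bool -> bool -> bool) :
  pop_pr q (fun t a b => ~~ P t a b) x = 1 - pop_pr q P x.
Proof.
rewrite -pop_pr_predT (pop_pr_split (fun _ _ _ => true) P).
by rewrite [X in X - _]addrC (addrK (pop_pr q P x)).
Qed.

Definition prTY_X (s y : bool) : R :=
  pop_pr q (fun t a b => (t == s) && (Ystar t a b == y)) x.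

Lemma prT_X_false : prT_X q false x = 1 - prT_X q true x.
Proof. by rewrite -pop_pr_compl; apply: eq_pop_pr => -[]. Qed.

Lemma prY_X_false : prY_X q false x = 1 - prY_X q true x.
Proof. by rewrite -pop_pr_compl; apply: eq_pop_pr => t a b; case: Ystar. Qed.

Lemma prT_X_total (s : bool) : prT_X q s x = prTY_X s true + prTY_X s false.
Proof.
rewrite /prT_X (pop_pr_split _ (fun t a b => Ystar t a b == true)).
by congr (_ + _); apply: eq_pop_pr => t a b; case: Ystar.
Qed.

Lemma prYpot_TX_consistent (s : bool) : prYpot_TX q s s x = prTY_X s true / prT_X q s x.
Proof.
rewrite /prYpot_TX; congr (_ * _).
by apply: eq_pop_pr => t a b; case: s t a b => [] [] [] [].
Qed.

Lemma prYpot_X_total (s : bool) :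
  prT_X q true x != 0 -> prT_X q false x != 0 ->
  prYpot_X q s x = prT_X q true x * prYpot_TX q s true x
                 + prT_X q false x * prYpot_TX q s false x.
Proof.
move=> eT1 eT0; rewrite /prYpot_TX !(mulrC (prT_X q _ x)) !divfK //.
rewrite /prYpot_X (pop_pr_split _ (fun t _ _ => t == true)).
by congr (_ + _); apply: eq_pop_pr => -[] a b; rewrite andbC.
Qed.

Lemma prYpot_X_unconfounded (s : bool) :
  prT_X q true x != 0 -> prT_X q false x != 0 ->
  prYpot_TX q s true x = prYpot_TX q s false x ->
  prYpot_X q s x = prYpot_TX q s s x.
Proof.
move=> eT1 eT0 unconf; rewrite prYpot_X_total // -unconf -mulrDl.
by rewrite prT_X_false addrC subrK mul1r; case: s unconf.
Qed.

Lemma theta_AR_prT_XY :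
  prT_X q true x != 0 -> prT_X q false x != 0 -> prY_X q true x != 0 ->
  (forall s, prYpot_TX q s true x = prYpot_TX q s false x) ->
  theta_AR q x = prY_X q true x *
    (prT_XY q true true x / prT_X q true x - prT_XY q false true x / prT_X q false x).
Proof.
move=> eT1 eT0 mY1 unconf; rewrite /theta_AR !prYpot_X_unconfounded //.
rewrite !prYpot_TX_consistent /prT_XY -!/(prTY_X _ _); field.
by rewrite mY1 eT1 eT0.
Qed.

Lemma prT_X_mixture (s : bool) :
  prY_X q true x != 0 -> prY_X q false x != 0 ->
  prT_XY q s false x + prY_X q true x * (prT_XY q s true x - prT_XY q s false x)
  = prT_X q s x.
Proof.
move=> mY1 mY0; rewrite prT_X_total /prT_XY -!/(prTY_X _ _).
move: mY0; rewrite prY_X_false => mY0; field.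
by rewrite mY1 mY0.
Qed.
End ConditionalLaw.

Section ObservedLaw.
Variables (R : realType) (T : Type) (h0 : R) (fo : bool -> T -> R) (x : T).
Hypotheses (h0_gt0 : 0 < h0) (h0_lt1 : h0 < 1).
Hypotheses (fo1_gt0 : 0 < fo true x) (fo0_gt0 : 0 < fo false x).

Let h0_neq0 : h0 != 0. Proof. by rewrite gt_eqF. Qed.
Let h0c_neq0 : 1 - h0 != 0. Proof. by rewrite gt_eqF // subr_gt0. Qed.
Let obs_mixture_neq0 : h0 * fo true x + (1 - h0) * fo false x != 0.
Proof. by rewrite gt_eqF // addr_gt0 // mulr_gt0 // subr_gt0. Qed.

Lemma r_fun_Design1E (p : R) :
  p * fo true x + (1 - p) * fo false x != 0 ->
  r_fun h0 fo Design1 x p = p * fo true x / (p * fo true x + (1 - p) * fo false x).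
Proof.
move=> mixture_neq0; rewrite /r_fun /obs_prY_X /=; field.
have -> : p * (1 - h0) * (h0 * fo true x) + h0 * (1 - p) * ((1 - h0) * fo false x)
        = h0 * (1 - h0) * (p * fo true x + (1 - p) * fo false x) by ring.
by rewrite mixture_neq0 obs_mixture_neq0 !mulf_neq0.
Qed.

Lemma r_fun_Design2E (p : R) :
  r_fun h0 fo Design2 x p = p * fo true x / fo false x.
Proof.
rewrite /r_fun /obs_prY_X /=; field.
by rewrite h0_neq0 h0c_neq0 obs_mixture_neq0 gt_eqF.
Qed.

End ObservedLaw.

Section Identification.
Variables (R : realType) (d : measure_display) (T : measurableType d).
Variables (mu : {measure set T -> \bar R}) (f : T -> R) (q : T -> bool -> bool -> bool -> R).
Variables (h0 : R) (fo : bool -> T -> R) (Pi : bool -> bool -> T -> R) (x : T).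
Hypotheses (h0_gt0 : 0 < h0) (h0_lt1 : h0 < 1).
Hypothesis q_sum1 : \sum_(t : bool) \sum_(a : bool) \sum_(b : bool) q x t a b = 1.
Hypotheses (f_gt0 : 0 < f x) (fo_gt0 : forall y, 0 < fo y x).

Lemma fX_Y_gt0_prY_neq0 (y : bool) : 0 < fX_Y mu f q y x -> prY mu f q y != 0.
Proof. by apply: contraTneq; rewrite /fX_Y => ->; rewrite invr0 mulr0 ltxx. Qed.

Lemma fX_Y_gt0_prY_X_neq0 (y : bool) : 0 < fX_Y mu f q y x -> prY_X q y x != 0.
Proof. by apply: contraTneq; rewrite /fX_Y => ->; rewrite mulr0 mul0r ltxx. Qed.

Lemma prY_mul_fX_Y (y : bool) :
  prY mu f q y != 0 -> prY mu f q y * fX_Y mu f q y x = f x * prY_X q y x.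
Proof. by move=> prY_neq0; rewrite /fX_Y mulrC divfK. Qed.

Lemma r_fun_Design1_p0 :
  (forall y, fo y x = fX_Y mu f q y x) ->
  r_fun h0 fo Design1 x (p0 mu f q) = prY_X q true x.
Proof.
move=> fo_eq; have prY_neq0 y : prY mu f q y != 0.
  by apply: fX_Y_gt0_prY_neq0; rewrite -fo_eq.
have mixture : p0 mu f q * fo true x + (1 - p0 mu f q) * fo false x = f x.
  rewrite !fo_eq -[p0 mu f q]/(prY mu f q true) -[1 - _]/(prY mu f q false).
  by rewrite !prY_mul_fX_Y // -mulrDr prY_X_false // addrC subrK mulr1.
rewrite r_fun_Design1E ?mixture ?gt_eqF // fo_eq -[p0 mu f q]/(prY mu f q true).
by rewrite prY_mul_fX_Y // mulrC mulKf ?gt_eqF.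
Qed.

Lemma r_fun_Design2_p0 :
  fo false x = f x -> fo true x = fX_Y mu f q true x ->
  r_fun h0 fo Design2 x (p0 mu f q) = prY_X q true x.
Proof.
move=> fo0_eq fo1_eq; have prY1_neq0 : prY mu f q true != 0.
  by apply: fX_Y_gt0_prY_neq0; rewrite -fo1_eq.
rewrite r_fun_Design2E // fo0_eq fo1_eq -[p0 mu f q]/(prY mu f q true).
by rewrite prY_mul_fX_Y // mulrC mulKf ?gt_eqF.
Qed.

Lemma Gamma_AR_Design1_p0 :
  (forall y, fo y x = fX_Y mu f q y x) -> (forall t y, Pi t y x = prT_XY q t y x) ->
  Gamma_AR h0 fo Pi Design1 x (p0 mu f q)
  = prT_XY q true true x / prT_X q true x - prT_XY q false true x / prT_X q false x.
Proof.
move=> fo_eq Pi_eq; have prY_X_neq0 y : prY_X q y x != 0.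
  by apply: fX_Y_gt0_prY_X_neq0; rewrite -fo_eq.
by rewrite /Gamma_AR r_fun_Design1_p0 // !Pi_eq !prT_X_mixture.
Qed.

Lemma Gamma_AR_Design2_0 :
  (forall t, Pi t false x = prT_X q t x) -> (forall t, Pi t true x = prT_XY q t true x) ->
  Gamma_AR h0 fo Pi Design2 x 0
  = prT_XY q true true x / prT_X q true x - prT_XY q false true x / prT_X q false x.
Proof. by move=> Pi0_eq Pi1_eq; rewrite /Gamma_AR /r_fun !mul0r !addr0 !Pi0_eq !Pi1_eq. Qed.

End Identification.

Theorem theorem5 (R : realType) (d : measure_display) (T : measurableType d)
  (mu : {measure set T -> \bar R}) (f : T -> R) (q : T -> bool -> bool -> bool -> R)
  (h0 : R) (fo : bool -> T -> R) (Pi : bool -> bool -> T -> R) (D : design) :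
  pop_model mu f q ->
  0 < h0 < 1 ->
  design_holds mu f q D fo Pi ->
  (forall t y x, supp f x -> Pi t y x != 0) ->
  common_support f fo ->
  overlap f q ->
  unconfounded f q ->
  forall x, supp f x ->
    theta_AR q x =
    r_fun h0 fo D x (p0 mu f q) *
    Gamma_AR h0 fo Pi D x (match D with Design1 => p0 mu f q | Design2 => 0 end).
Proof.
move=> [_ [_ [_ [_ [_ q_sum1]]]]] /andP[h0_gt0 h0_lt1] design _ common ovl unconf x x_supp.
have [_ /andP[e1_gt0 e1_lt1]] := ovl x x_supp.
have eT1 : prT_X q true x != 0 by rewrite gt_eqF.
have eT0 : prT_X q false x != 0 by rewrite (prT_X_false (q_sum1 x)) gt_eqF // subr_gt0.
have fo_gt0 y : 0 < fo y x by apply/(common x y).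
have theta_eq := theta_AR_prT_XY (q_sum1 x) eT1 eT0 _ (unconf x x_supp).
case: D design => design.
- have fo_eq y : fo y x = fX_Y mu f q y x by case: (design x x_supp true y).
  have Pi_eq t y : Pi t y x = prT_XY q t y x by case: (design x x_supp t y).
  have mY1 : prY_X q true x != 0.
    by move: (fo_gt0 true); rewrite fo_eq; apply: fX_Y_gt0_prY_X_neq0.
  by rewrite theta_eq // r_fun_Design1_p0 // Gamma_AR_Design1_p0.
- have [fo0_eq _ fo1_eq _] := design x x_supp true.
  have mY1 : prY_X q true x != 0.
    by move: (fo_gt0 true); rewrite fo1_eq; apply: fX_Y_gt0_prY_X_neq0.
  have Pi0_eq t : Pi t false x = prT_X q t x by case: (design x x_supp t).
  have Pi1_eq t : Pi t true x = prT_XY q t true x by case: (design x x_supp t).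
  by rewrite theta_eq // r_fun_Design2_p0 // (Gamma_AR_Design2_0 _ _ Pi0_eq Pi1_eq).
Qed.
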